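(* Let $\{a_n\}_{n\ge1}$ be a monotone decreasing sequence of positive real numbers. Suppose that for $n\ge 2$ \[ \frac{a_{2n}}{a_n}=\frac12-\frac{\beta}{\ln n}+\frac{\gamma(n)}{(\ln n)^p}, \] where $p>1$, $\beta$ is a real constant independent of $n$, and $\gamma(n)$ is a bounded function of $n$. Then: (i) if $\beta>\frac{\ln2}{2}$, then $\sum_{n=1}^\infty a_n$ converges; (ii) if $\beta\le\frac{\ln2}{2}$, then $\sum_{n=1}^\infty a_n$ diverges.
   Context: Here $\ln$ denotes the natural logarithm. *)

From Stdlib Require Import Reals.
From Coquelicot Require Import Coquelicot.
Open Scope R_scope.

Definition series_from1_converges (a : nat -> R) : Prop :=
  ex_series (fun n => a (S n)).

From Stdlib Require Import Reals Lra Lia.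
From Coquelicot Require Import Coquelicot.
Open Scope R_scope.

(* Cauchy condensation replaces a_n by b_k = 2^k a_(2^k), and the hypothesis
   at n = 2^k reads b_(k+1) / b_k = 1 - c/k + O(k^-p) with c = 2 beta / ln 2.
   This is Gauss's test: for c > 1 Raabe's telescoping argument bounds the
   partial sums of b, while for c <= 1 the product of the ratios keeps k b_k
   bounded below, so b dominates a multiple of the harmonic series. *)

Lemma pow2_ge_1 (k : nat) : (1 <= 2 ^ k)%nat.
Proof. induction k as [|k IH]; simpl; lia. Qed.

Lemma INR_pow2 (k : nat) : INR (2 ^ k) = 2 ^ k.
Proof. rewrite pow_INR. replace (INR 2) with 2 by (simpl; lra). reflexivity. Qed.

Lemma Rpower_gt_0 (x y : R) : 0 < Rpower x y.
Proof. apply exp_pos. Qed.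

Lemma sum_n_m_le_loc (u v : nat -> R) (m n : nat) :
  (forall k, (m <= k <= n)%nat -> u k <= v k) -> sum_n_m u m n <= sum_n_m v m n.
Proof.
  intros Huv.
  rewrite (sum_n_m_ext_loc u (fun k => Rmin (u k) (v k))).
  - apply sum_n_m_le. intros k. apply Rmin_r.
  - intros k Hk. rewrite Rmin_left; auto.
Qed.

Lemma sum_n_m_nonneg (u : nat -> R) (m n : nat) :
  (forall k, (m <= k <= n)%nat -> 0 <= u k) -> 0 <= sum_n_m u m n.
Proof.
  intros Hu. apply Rle_trans with (sum_n_m (fun _ => 0) m n).
  - rewrite sum_n_m_const. lra.
  - now apply sum_n_m_le_loc.
Qed.

Lemma ex_series_iff_bounded_sums (u : nat -> R) :
  (forall n, 0 <= u n) -> ex_series u <-> exists L, forall N, sum_n u N <= L.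
Proof.
  intros Hu.
  assert (Hincr : forall N, sum_n u N <= sum_n u (S N)).
  { intros N. rewrite sum_Sn. change plus with Rplus. specialize (Hu (S N)). lra. }
  split.
  - intros [l Hl]. exists l. now apply is_lim_seq_incr_compare.
  - intros [L HL]. destruct (ex_finite_lim_seq_incr _ L Hincr HL) as [l Hl]. now exists l.
Qed.

Section Condensation.

Variable a : nat -> R.
Hypothesis a_nonneg : forall n, (1 <= n)%nat -> 0 <= a n.
Hypothesis a_noninc : forall n, (1 <= n)%nat -> a (S n) <= a n.

Lemma noninc_le (m n : nat) : (1 <= m <= n)%nat -> a n <= a m.
Proof.
  intros [Hm Hmn]. induction Hmn as [|n Hmn IH]; [lra|].
  specialize (a_noninc n ltac:(lia)). lra.
Qed.

Lemma dyadic_block_bounds (k : nat) :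
  2 ^ k * a (2 ^ S k)%nat <= sum_n_m a (2 ^ k) (2 ^ S k - 1) <= 2 ^ k * a (2 ^ k)%nat.
Proof.
  pose proof (pow2_ge_1 k) as Hk. rewrite Nat.pow_succ_r'.
  assert (Hlen : INR (S (2 * 2 ^ k - 1) - 2 ^ k) = 2 ^ k).
  { rewrite <- INR_pow2. f_equal. lia. }
  rewrite <- Hlen, <- !sum_n_m_const.
  split; apply sum_n_m_le_loc; intros j Hj; apply noninc_le; lia.
Qed.

Lemma dyadic_partial_sum (K : nat) :
  sum_n_m a 1 (2 ^ S K - 1) = sum_n (fun k => sum_n_m a (2 ^ k) (2 ^ S k - 1)) K.
Proof.
  induction K as [|K IH].
  - now rewrite sum_O.
  - pose proof (pow2_ge_1 K) as HK.
    rewrite sum_Sn, <- IH, (sum_n_m_Chasles a 1 (2 ^ S K - 1))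
      by (rewrite !Nat.pow_succ_r'; lia).
    do 2 f_equal. rewrite Nat.pow_succ_r'. lia.
Qed.

Lemma condensed_sum_upper (K : nat) :
  sum_n_m a 1 (2 ^ S K - 1) <= sum_n (fun k => 2 ^ k * a (2 ^ k)%nat) K.
Proof.
  rewrite dyadic_partial_sum. apply sum_n_m_le. intros k. apply dyadic_block_bounds.
Qed.

Lemma condensed_sum_lower (K : nat) :
  sum_n (fun k => 2 ^ k * a (2 ^ S k)%nat) K <= sum_n_m a 1 (2 ^ S K - 1).
Proof.
  rewrite dyadic_partial_sum. apply sum_n_m_le. intros k. apply dyadic_block_bounds.
Qed.

Theorem cauchy_condensation :
  ex_series (fun n => a (S n)) <-> ex_series (fun k => 2 ^ k * a (2 ^ k)%nat).
Proof.
  assert (Hc : forall k, 0 <= 2 ^ k * a (2 ^ k)%nat).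
  { intros k. apply Rmult_le_pos; [apply pow_le; lra | apply a_nonneg, pow2_ge_1]. }
  assert (HaS : forall n, 0 <= a (S n)) by (intros n; apply a_nonneg; lia).
  assert (Hmono : forall m n, (m <= n)%nat -> sum_n_m a 1 m <= sum_n_m a 1 n).
  { intros m n Hmn. rewrite (sum_n_m_Chasles a 1 m n) by lia. change plus with Rplus.
    assert (0 <= sum_n_m a (S m) n) by (apply sum_n_m_nonneg; intros; apply a_nonneg; lia).
    lra. }
  rewrite !ex_series_iff_bounded_sums by assumption.
  split; intros [L HL].
  - rewrite <- ex_series_iff_bounded_sums by assumption.
    apply ex_series_incr_1.
    apply (ex_series_ext (fun k => scal 2 (2 ^ k * a (2 ^ S k)%nat))).
    { intros k. change (scal 2 ?x) with (2 * x). rewrite <- Rmult_assoc. reflexivity. }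
    apply (@ex_series_scal_l R_AbsRing R_NormedModule), ex_series_iff_bounded_sums.
    { intros k. apply Rmult_le_pos; [apply pow_le; lra | apply a_nonneg, pow2_ge_1]. }
    exists L. intros K. eapply Rle_trans; [apply condensed_sum_lower|].
    pose proof (pow2_ge_1 K).
    replace (2 ^ S K - 1)%nat with (S (2 ^ S K - 2)) by (rewrite Nat.pow_succ_r'; lia).
    rewrite <- sum_n_m_S. apply HL.
  - exists L. intros N. unfold sum_n. rewrite sum_n_m_S.
    pose proof (Nat.pow_gt_lin_r 2 (S (S N)) ltac:(lia)).
    eapply Rle_trans; [apply (Hmono _ (2 ^ S (S N) - 1)%nat); lia|].
    eapply Rle_trans; [apply condensed_sum_upper | apply HL].
Qed.

End Condensation.

Lemma harmonic_series_divergent : ~ ex_series (fun n => / INR (S n)).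
Proof.
  intros H.
  apply (cauchy_condensation (fun n => / INR n)) in H.
  - apply ex_series_lim_0, (is_lim_seq_ext _ (fun _ => 1)) in H.
    + apply is_lim_seq_unique in H. rewrite Lim_seq_const in H. injection H. lra.
    + intros k. rewrite INR_pow2. field. apply pow_nonzero. lra.
  - intros n Hn. left. apply Rinv_0_lt_compat, lt_0_INR. lia.
  - intros n Hn. apply Rinv_le_contravar; [apply lt_0_INR; lia | rewrite S_INR; lra].
Qed.

Lemma ex_series_inv_Rpower (q : R) : 1 < q -> ex_series (fun n => / Rpower (INR (S n)) q).
Proof.
  intros Hq.
  apply (cauchy_condensation (fun n => / Rpower (INR n) q)).
  - intros n Hn. left. apply Rinv_0_lt_compat, Rpower_gt_0.
  - intros n Hn. apply Rinv_le_contravar; [apply Rpower_gt_0|].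
    apply Rle_Rpower_l; [lra | split; [apply lt_0_INR; lia | rewrite S_INR; lra]].
  - set (r := Rpower 2 (1 - q)).
    assert (Hr : 0 < r < 1).
    { split; [apply Rpower_gt_0|]. rewrite <- (Rpower_O 2) by lra. apply Rpower_lt; lra. }
    apply (ex_series_ext (fun k => r ^ k)).
    + intros k. rewrite INR_pow2, <- (Rpower_pow k r), <- (Rpower_pow k 2) by lra.
      unfold r. rewrite !Rpower_mult.
      replace ((1 - q) * INR k) with (INR k + - (INR k * q)) by ring.
      rewrite Rpower_plus, Rpower_Ropp. reflexivity.
    + apply ex_series_geom. rewrite Rabs_right; lra.
Qed.

Lemma Rpower_INR_eventually_ge (e T : R) :
  0 < e -> exists K, forall k, (K <= k)%nat -> T <= Rpower (INR k) e.
Proof.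
  intros He. destruct (INR_unbounded (exp (T / e))) as [K HK]. exists K. intros k Hk.
  assert (Hexp : exp (T / e) < INR k) by (pose proof (le_INR K k Hk); lra).
  assert (Hln : T / e <= ln (INR k)).
  { rewrite <- (ln_exp (T / e)). apply ln_le; [apply exp_pos | lra]. }
  assert (T <= e * ln (INR k)).
  { replace T with (e * (T / e)) by (field; lra). apply Rmult_le_compat_l; lra. }
  pose proof (exp_ineq1_le (e * ln (INR k))). unfold Rpower. lra.
Qed.

Lemma raabe_test (b : nat -> R) (s : R) (K : nat) :
  (forall k, 0 < b k) -> 1 < s -> (1 <= K)%nat ->
  (forall k, (K <= k)%nat -> b (S k) <= b k * (1 - s / INR k)) -> ex_series b.
Proof.
  intros Hb Hs HK Hratio.
  assert (Hstep : forall n, INR (K + n) * b (S (K + n)) <= (INR (K + n) - s) * b (K + n)%nat).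
  { intros n. assert (0 < INR (K + n)) by (apply lt_0_INR; lia).
    replace ((INR (K + n) - s) * b (K + n)%nat)
      with (INR (K + n) * (b (K + n)%nat * (1 - s / INR (K + n)))) by (field; lra).
    apply Rmult_le_compat_l; [lra | apply Hratio; lia]. }
  (* Raabe's telescoping: (s - 1) b_k <= (k - 1) b_k - k b_(k+1). *)
  assert (Htel : forall N, (s - 1) * sum_n (fun n => b (K + n)%nat) N
                           + INR (K + N) * b (S (K + N)) <= (INR K - 1) * b K).
  { induction N as [|N IH].
    - rewrite sum_O, Nat.add_0_r. specialize (Hstep 0%nat). rewrite Nat.add_0_r in Hstep. lra.
    - rewrite sum_Sn. change plus with Rplus. specialize (Hstep (S N)).
      rewrite Nat.add_succ_r, S_INR in *. lra. }
  apply (ex_series_incr_n b K), ex_series_iff_bounded_sums; [intros n; left; apply Hb|].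
  exists ((INR K - 1) * b K / (s - 1)). intros N.
  apply Rle_div_r; [lra|]. specialize (Htel N).
  assert (0 <= INR (K + N) * b (S (K + N)))
    by (apply Rmult_le_pos; [apply pos_INR | left; apply Hb]).
  lra.
Qed.

Lemma not_ex_series_ge_harmonic (b : nat -> R) (C : R) (K : nat) :
  0 < C -> (forall n, (K <= n)%nat -> C / INR n <= b n) -> ~ ex_series b.
Proof.
  intros HC Hb Hser. apply harmonic_series_divergent.
  apply (ex_series_incr_n _ K).
  apply (ex_series_ext (fun n => scal (/ C) (C / INR (S (K + n))))).
  { intros n. change (@eq R (/ C * (C / INR (S (K + n)))) (/ INR (S (K + n)))).
    field. split; [apply not_0_INR | lra]; lia. }
  apply (@ex_series_scal_l R_AbsRing R_NormedModule).
  apply (@ex_series_le R_AbsRing R_CompleteNormedModule _ (fun n => b (S K + n)%nat)).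
  - intros n. change norm with Rabs. rewrite Rabs_pos_eq.
    + apply Hb. lia.
    + apply Rdiv_le_0_compat; [lra | apply lt_0_INR; lia].
  - now apply ex_series_incr_n.
Qed.

Lemma not_ex_series_of_weighted_ratio_ge (b x : nat -> R) (K : nat) :
  (forall k, 0 < b k) -> (forall k, 0 <= x k) -> ex_series x ->
  (forall k, (K <= k)%nat -> INR k * b k * (1 - x k) <= INR (S k) * b (S k)) ->
  ~ ex_series b.
Proof.
  intros Hb Hx Hxs Hratio.
  destruct (Cauchy_ex_series x Hxs (mkposreal (1 / 2) ltac:(lra))) as [N0 HN0].
  set (K1 := S (Nat.max N0 K)).
  set (w := fun k => INR k * b k).
  assert (Htail : forall d, 0 <= sum_n_m x K1 (K1 + d) < 1 / 2).
  { intros d. split.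
    - apply sum_n_m_nonneg. auto.
    - eapply Rle_lt_trans; [apply Rle_abs | exact (HN0 K1 (K1 + d)%nat ltac:(lia) ltac:(lia))]. }
  assert (HwK1 : 0 < w K1) by (apply Rmult_lt_0_compat; [apply lt_0_INR; lia | apply Hb]).
  (* w (K1 + d + 1) >= w K1 * prod (1 - x_j) >= w K1 * (1 - sum x_j) *)
  assert (Hprod : forall d, w K1 * (1 - sum_n_m x K1 (K1 + d)) <= w (S (K1 + d))).
  { induction d as [|d IH].
    - rewrite Nat.add_0_r, sum_n_n. apply Hratio. lia.
    - pose proof (Htail (S d)) as [_ Hlt]. pose proof (Htail d) as [Hge _].
      rewrite Nat.add_succ_r, sum_n_Sm in * by lia. change plus with Rplus in *.
      set (y := x (S (K1 + d))) in *. set (s := sum_n_m x K1 (K1 + d)) in *.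
      assert (0 <= y) by apply Hx.
      assert (w K1 * (1 - s) * (1 - y) <= w (S (K1 + d)) * (1 - y))
        by (apply Rmult_le_compat_r; lra).
      assert (0 <= w K1 * s * y) by (apply Rmult_le_pos; [apply Rmult_le_pos|]; lra).
      assert (w (S (K1 + d)) * (1 - y) <= w (S (S (K1 + d)))) by (apply Hratio; lia).
      lra. }
  apply (not_ex_series_ge_harmonic b (w K1 / 2) (S K1)); [lra|].
  intros [|n] Hn; [lia|].
  assert (Hn0 : 0 < INR (S n)) by (apply lt_0_INR; lia).
  apply Rle_div_l; [lra|]. rewrite Rmult_comm.
  replace n with (K1 + (n - K1))%nat by lia.
  pose proof (Htail (n - K1)%nat) as [_ Hs].
  assert (w K1 * sum_n_m x K1 (K1 + (n - K1)) <= w K1 * (1 / 2))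
    by (apply Rmult_le_compat_l; lra).
  specialize (Hprod (n - K1)%nat). unfold w in *. lra.
Qed.

Section GaussTest.

Variables (b g : nat -> R) (c p G : R).
Hypothesis b_pos : forall k, 0 < b k.
Hypothesis p_gt_1 : 1 < p.
Hypothesis g_bounded : forall k, (1 <= k)%nat -> Rabs (g k) <= G.
Hypothesis b_ratio :
  forall k, (1 <= k)%nat -> b (S k) = b k * (1 - c / INR k + g k / Rpower (INR k) p).

Lemma gauss_test_convergent : 1 < c -> ex_series b.
Proof.
  intros Hc. set (s := (1 + c) / 2).
  destruct (Rpower_INR_eventually_ge (p - 1) (G / (c - s))) as [K0 HK0]; [lra|].
  apply (raabe_test b s (Nat.max K0 1)); auto; [unfold s; lra | lia |].
  intros k Hk. rewrite b_ratio by lia.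
  assert (Hk0 : 0 < INR k) by (apply lt_0_INR; lia).
  set (R1 := Rpower (INR k) (p - 1)).
  assert (HR1 : 0 < R1) by apply Rpower_gt_0.
  assert (Hsplit : Rpower (INR k) p = INR k * R1).
  { unfold R1. rewrite <- (Rpower_1 (INR k)) at 2 by lra. rewrite <- Rpower_plus. f_equal. ring. }
  assert (HGR1 : G <= (c - s) * R1).
  { rewrite Rmult_comm. apply Rle_div_l; [unfold s; lra|]. apply HK0. lia. }
  assert (Hsmall : g k / Rpower (INR k) p <= (c - s) / INR k).
  { rewrite Hsplit. apply (Rmult_le_reg_r (INR k * R1)); [apply Rmult_lt_0_compat; lra|].
    replace (g k / (INR k * R1) * (INR k * R1)) with (g k) by (field; lra).
    replace ((c - s) / INR k * (INR k * R1)) with ((c - s) * R1) by (field; lra).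
    pose proof (Rle_abs (g k)). pose proof (g_bounded k ltac:(lia)). lra. }
  apply Rmult_le_compat_l; [left; apply b_pos|]. unfold Rdiv in *. lra.
Qed.

Lemma gauss_test_divergent : c <= 1 -> ~ ex_series b.
Proof.
  intros Hc.
  assert (HG : 0 <= G).
  { pose proof (g_bounded 1 (le_n 1)). pose proof (Rabs_pos (g 1%nat)). lra. }
  (* (k + 1) (1 - 1/k - G/k^p) >= k (1 - x_k) with this summable x. *)
  set (x := fun k => / Rpower (INR k) 2 + 2 * G / Rpower (INR k) p).
  apply (not_ex_series_of_weighted_ratio_ge b x 1); auto.
  - intros k. unfold x. pose proof (Rpower_gt_0 (INR k) 2). pose proof (Rpower_gt_0 (INR k) p).
    apply Rplus_le_le_0_compat; [left; apply Rinv_0_lt_compat; lra | apply Rdiv_le_0_compat; lra].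
  - apply ex_series_incr_1.
    apply (ex_series_ext
             (fun n => plus (/ Rpower (INR (S n)) 2) (scal (2 * G) (/ Rpower (INR (S n)) p)))).
    { intros n. reflexivity. }
    apply (@ex_series_plus R_AbsRing R_NormedModule);
      [|apply (@ex_series_scal_l R_AbsRing R_NormedModule)]; apply ex_series_inv_Rpower; lra.
  - intros k Hk. rewrite b_ratio by lia. unfold x. rewrite S_INR.
    set (n := INR k). set (u := / n). set (v := / Rpower n p).
    assert (Hn : 1 <= n) by (apply (le_INR 1); lia).
    assert (Hnu : n * u = 1) by (unfold u; field; lra).
    assert (Hu : 0 < u) by (apply Rinv_0_lt_compat; lra).
    assert (Hv : 0 < v) by (apply Rinv_0_lt_compat, Rpower_gt_0).
    assert (Hsq : / Rpower n 2 = u * u).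
    { unfold u. rewrite <- Rinv_mult. f_equal.
      replace 2 with (INR 2) by (simpl; lra). rewrite Rpower_pow by lra. simpl. ring. }
    assert (Hg : - G <= g k).
    { pose proof (g_bounded k Hk). pose proof (Rle_abs (- g k)). rewrite Rabs_Ropp in *. lra. }
    assert (Hfactor : 1 - u - G * v <= 1 - c / n + g k / Rpower n p).
    { unfold Rdiv. fold u v. assert (c * u <= u) by nra. assert (- G * v <= g k * v) by nra. lra. }
    assert (Hlin : n * (1 - (u * u + 2 * G * v)) <= (n + 1) * (1 - u - G * v)).
    { assert (0 <= G * v * (n - 1)) by (apply Rmult_le_pos; nra). nra. }
    rewrite Hsq. unfold Rdiv at 1. fold v.
    pose proof (b_pos k).
    apply Rle_trans with (b k * ((n + 1) * (1 - u - G * v))).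
    + replace (n * b k * (1 - (u * u + 2 * G * v)))
        with (b k * (n * (1 - (u * u + 2 * G * v)))) by ring.
      apply Rmult_le_compat_l; lra.
    + replace ((n + 1) * (b k * (1 - c / n + g k / Rpower n p)))
        with (b k * ((n + 1) * (1 - c / n + g k / Rpower n p))) by ring.
      apply Rmult_le_compat_l; [lra|]. apply Rmult_le_compat_l; lra.
Qed.

End GaussTest.

Lemma dyadic_ratio (x y beta gam p : R) (k : nat) :
  (1 <= k)%nat -> 0 < x ->
  y / x = 1 / 2 - beta / ln (INR (2 ^ k)) + gam / Rpower (ln (INR (2 ^ k))) p ->
  2 ^ S k * y
  = 2 ^ k * x * (1 - (2 * beta / ln 2) / INR k + (2 * gam / Rpower (ln 2) p) / Rpower (INR k) p).
Proof.
  intros Hk Hx Hratio.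
  assert (Hln2 : 0 < ln 2) by (pose proof ln_lt_2; lra).
  assert (Hk0 : 0 < INR k) by (apply lt_0_INR; lia).
  rewrite INR_pow2, ln_pow, <- Rpower_mult_distr in Hratio by lra.
  assert (Hy : y = x * (1 / 2 - beta / (INR k * ln 2)
                        + gam / (Rpower (INR k) p * Rpower (ln 2) p))).
  { rewrite <- Hratio. field. lra. }
  rewrite Hy. pose proof (Rpower_gt_0 (INR k) p). pose proof (Rpower_gt_0 (ln 2) p).
  simpl pow. field. lra.
Qed.

Theorem corollary2p1p2 (a : nat -> R) (beta p : R) (gamma : nat -> R) :
  (forall n : nat, (1 <= n)%nat -> 0 < a n) ->
  (forall n : nat, (1 <= n)%nat -> a (S n) <= a n) ->
  1 < p ->
  (exists M : R, forall n : nat, (2 <= n)%nat -> Rabs (gamma n) <= M) ->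
  (forall n : nat, (2 <= n)%nat ->
     a (2 * n)%nat / a n
     = 1 / 2 - beta / ln (INR n) + gamma n / Rpower (ln (INR n)) p) ->
  (beta > ln 2 / 2 -> series_from1_converges a) /\
  (beta <= ln 2 / 2 -> ~ series_from1_converges a).
Proof.
  intros Hpos Hdec Hp [M HM] Hratio.
  assert (Hln2 : 0 < ln 2) by (pose proof ln_lt_2; lra).
  assert (Hn2 : forall k, (1 <= k)%nat -> (2 <= 2 ^ k)%nat).
  { intros [|k] Hk; [lia|]. rewrite Nat.pow_succ_r'. pose proof (pow2_ge_1 k). lia. }
  set (b := fun k => 2 ^ k * a (2 ^ k)%nat).
  set (c := 2 * beta / ln 2).
  set (g := fun k => 2 * gamma (2 ^ k)%nat / Rpower (ln 2) p).
  assert (Hb : forall k, 0 < b k).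
  { intros k. apply Rmult_lt_0_compat; [apply pow_lt; lra | apply Hpos, pow2_ge_1]. }
  assert (Hg : forall k, (1 <= k)%nat -> Rabs (g k) <= 2 * M / Rpower (ln 2) p).
  { intros k Hk. pose proof (Rpower_gt_0 (ln 2) p). unfold g.
    rewrite Rabs_div, Rabs_mult, (Rabs_pos_eq 2), (Rabs_pos_eq (Rpower _ _)) by lra.
    unfold Rdiv. apply Rmult_le_compat_r; [left; apply Rinv_0_lt_compat; lra|].
    apply Rmult_le_compat_l; [lra | apply HM, Hn2, Hk]. }
  assert (Hbr : forall k, (1 <= k)%nat ->
                 b (S k) = b k * (1 - c / INR k + g k / Rpower (INR k) p)).
  { intros k Hk. apply dyadic_ratio; [exact Hk | apply Hpos, pow2_ge_1 | apply Hratio, Hn2, Hk]. }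
  assert (Hcond : series_from1_converges a <-> ex_series b).
  { apply cauchy_condensation; intros n Hn; [left; apply Hpos | apply Hdec]; exact Hn. }
  split; intros Hbeta; rewrite Hcond.
  - apply (gauss_test_convergent b g c p _ Hb Hp Hg Hbr).
    unfold c. apply Rlt_div_r; lra.
  - apply (gauss_test_divergent b g c p _ Hb Hp Hg Hbr).
    unfold c. apply Rle_div_l; lra.
Qed.
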